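(* Let $G$ be a connected groupoid with finite object set $G_0=\{e_1,\dots,e_r\}$, $A=\bigoplus_{i=1}^r A_i$ a unital ring with $A_i:=A_{e_i}\neq 0$ for all $i$, and $\alpha=(A_g,\alpha_g)_{g\in G}$ a unital global action of $G$ on $A$. If $A\subset A\star_\alpha G$ is a separable extension, then $G$ is finite.
   Context: A groupoid $G$ is a small category in which every morphism is invertible; $G_0$ is its object set (objects identified with identity morphisms), $s,t$ source and target; $gh$ is defined iff $s(g)=t(h)$; $G(e,f)$ is the set of morphisms from $e$ to $f$; $G$ is connected if $G(e,f)\neq\emptyset$ for all $e,f\in G_0$. A unital partial action of $G$ on $A$ is a family $\alpha=(A_g,\alpha_g)_{g\in G}$ where $A_{t(g)}$ is a two-sided ideal of $A$, $A_g=A1_g$ is a two-sided ideal of $A_{t(g)}$ with $1_g$ a central idempotent of $A$, $\alpha_g:A_{g^{-1}}\to A_g$ a ring isomorphism, such that $\alpha_e=\mathrm{id}_{A_e}$ for $e\in G_0$, $\alpha_h^{-1}(A_{g^{-1}}\cap A_h)\subseteq A_{(gh)^{-1}}$ and $\alpha_g(\alpha_h(x))=\alpha_{gh}(x)$ for $x\in\alpha_h^{-1}(A_{g^{-1}}\cap A_h)$, whenever $s(g)=t(h)$. It is global if $\alpha_g\alpha_h=\alpha_{gh}$ for all composable $g,h$; equivalently $A_g=A_{t(g)}$ for all $g\in G$. The (partial) skew groupoid ring $A\star_\alpha G=\bigoplus_{g\in G}A_g\delta_g$ has multiplication $(a_g\delta_g)(b_h\delta_h)=\alpha_g(\alpha_{g^{-1}}(a_g)b_h)\delta_{gh}$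 if $s(g)=t(h)$ and $0$ otherwise; it is unital with $1=\sum_{e\in G_0}1_e\delta_e$, and $A$ is regarded as a subring via $a\mapsto\sum_{e\in G_0}(a1_e)\delta_e$. A ring extension $R\subseteq S$ is separable if the multiplication map $S\otimes_R S\to S$ splits as a map of $(S,S)$-bimodules; equivalently there exists $x\in S\otimes_R S$ with $m(x)=1_S$ and $sx=xs$ for all $s\in S$. *)

From HB Require Import structures.
From mathcomp Require Import all_boot all_order all_algebra.
Set Implicit Arguments. Unset Strict Implicit. Unset Printing Implicit Defensive.
Import GRing.Theory.
Local Open Scope ring_scope.

Record groupoid := Groupoid {
  mor : eqType;
  obj : finType;
  src : mor -> obj;
  tgt : mor -> obj;
  idm : obj -> mor;
  comp : mor -> mor -> mor;
  inv : mor -> mor;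
  src_idm : forall e, src (idm e) = e;
  tgt_idm : forall e, tgt (idm e) = e;
  src_comp : forall g h, src g = tgt h -> src (comp g h) = src h;
  tgt_comp : forall g h, src g = tgt h -> tgt (comp g h) = tgt g;
  compA : forall g h k, src g = tgt h -> src h = tgt k ->
            comp g (comp h k) = comp (comp g h) k;
  comp_idl : forall g, comp (idm (tgt g)) g = g;
  comp_idr : forall g, comp g (idm (src g)) = g;
  src_inv : forall g, src (inv g) = tgt g;
  tgt_inv : forall g, tgt (inv g) = src g;
  comp_invr : forall g, comp g (inv g) = idm (tgt g);
  comp_invl : forall g, comp (inv g) g = idm (src g)
}.

Definition connected (G : groupoid) : Prop :=
  forall e f : obj G, exists g : mor G, src g = e /\ tgt g = f.

Definition finite_groupoid (G : groupoid) : Prop :=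
  exists s : seq (mor G), forall g : mor G, g \in s.

Definition inI (R : pzRingType) (u a : R) : Prop := exists b : R, a = b * u.

Section Action.
Variables (G : groupoid) (R : pzRingType).
(* one g = 1_g (so A_g = A 1_g), alpha g = alpha_g : A_{g^-1} -> A_g *)
Variables (one : mor G -> R) (alpha : mor G -> R -> R).

Record unital_partial_action : Prop := {
  one_idem : forall g, one g * one g = one g;
  one_central : forall g a, one g * a = a * one g;
  Ag_sub : forall g a, inI (one g) a -> inI (one (idm (tgt g))) a;
  alpha_into : forall g x, inI (one (inv g)) x -> inI (one g) (alpha g x);
  alpha_add : forall g x y, inI (one (inv g)) x -> inI (one (inv g)) y ->
      alpha g (x + y) = alpha g x + alpha g y;
  alpha_mul : forall g x y, inI (one (inv g)) x -> inI (one (inv g)) y ->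
      alpha g (x * y) = alpha g x * alpha g y;
  alpha_inj : forall g x y, inI (one (inv g)) x -> inI (one (inv g)) y ->
      alpha g x = alpha g y -> x = y;
  alpha_surj : forall g y, inI (one g) y ->
      exists x, inI (one (inv g)) x /\ alpha g x = y;
  alpha_id : forall e x, inI (one (idm e)) x -> alpha (idm e) x = x;
  alpha_comp : forall g h x, src g = tgt h ->
      inI (one (inv h)) x -> inI (one (inv g)) (alpha h x) ->
      inI (one (inv (comp g h))) x /\ alpha g (alpha h x) = alpha (comp g h) x
}.

Definition global_action : Prop :=
  unital_partial_action /\
  forall g a, inI (one g) a <-> inI (one (idm (tgt g))) a.

Definition direct_sum_decomp : Prop :=
  (forall a : R, exists f : obj G -> R,
      (forall e, inI (one (idm e)) (f e)) /\ a = \sum_(e : obj G) f e) /\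
  (forall f f' : obj G -> R,
      (forall e, inI (one (idm e)) (f e)) -> (forall e, inI (one (idm e)) (f' e)) ->
      \sum_(e : obj G) f e = \sum_(e : obj G) f' e -> forall e, f e = f' e).

(* Elements of the skew groupoid ring A *_alpha G, as finite formal sums:
   the list [(g_1,a_1);...;(g_n,a_n)] stands for sum_k (a_k 1_{g_k}) delta_{g_k}. *)
Definition skew := seq (mor G * R).

Definition coefS (x : skew) (g : mor G) : R :=
  \sum_(p <- x | p.1 == g) p.2 * one g.

Definition eqS (x y : skew) : Prop := forall g, coefS x g = coefS y g.

(* (a d_g)(b d_h) = alpha_g(alpha_{g^-1}(a) b) d_{gh} if s(g)=t(h), 0 otherwise *)
Definition mulS (x y : skew) : skew :=
  flatten [seq [seq (comp p.1 q.1,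
                     alpha p.1 (alpha (inv p.1) (p.2 * one p.1) * (q.2 * one q.1)))
               | q <- y & src p.1 == tgt q.1] | p <- x].

Definition oneS : skew := [seq (idm e, 1) | e <- enum (obj G)].

Definition embA (r : R) : skew := [seq (idm e, r * one (idm e)) | e <- enum (obj G)].

(* Tensor product (A *_alpha G) (x)_A (A *_alpha G): a formal sum
   [(x_1,y_1);...] stands for sum_i x_i (x) y_i; equality is defined through
   the universal property (equal images under every A-balanced biadditive map
   into every abelian group).  A biadditive map on S x S is given by its
   restrictions F g a h b = f(a d_g, b d_h) to homogeneous components. *)
Definition tensor := seq (skew * skew).

Definition evalS2 (M : zmodType) (F : mor G -> R -> mor G -> R -> M) (x y : skew) : M :=
  \sum_(p <- x) \sum_(q <- y) F p.1 (p.2 * one p.1) q.1 (q.2 * one q.1).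

Definition balanced (M : zmodType) (F : mor G -> R -> mor G -> R -> M) : Prop :=
  (forall g h a a' b, F g (a + a') h b = F g a h b + F g a' h b) /\
  (forall g h a b b', F g a h (b + b') = F g a h b + F g a h b') /\
  (forall (r : R) (x y : skew), evalS2 F (mulS x (embA r)) y = evalS2 F x (mulS (embA r) y)).

Definition evalT (M : zmodType) (F : mor G -> R -> mor G -> R -> M) (t : tensor) : M :=
  \sum_(p <- t) evalS2 F p.1 p.2.

Definition eqT (t t' : tensor) : Prop :=
  forall (M : zmodType) (F : mor G -> R -> mor G -> R -> M),
    balanced F -> evalT F t = evalT F t'.

Definition multT (t : tensor) : skew := flatten [seq mulS p.1 p.2 | p <- t].

Definition separable_ext : Prop :=
  exists t : tensor,
    eqS (multT t) oneS /\
    forall s : skew,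
      eqT [seq (mulS s p.1, p.2) | p <- t] [seq (p.1, mulS p.2 s) | p <- t].

End Action.

From Pilot Require Import Defs.
From HB Require Import structures.
From mathcomp Require Import all_boot all_order all_algebra.
Set Implicit Arguments. Unset Strict Implicit. Unset Printing Implicit Defensive.
Import GRing.Theory.
Local Open Scope ring_scope.

(* Let t = sum_i x_i (x) y_i be a separability element of S = A *_alpha G.
   The multiplication of S, followed by taking the coefficient and restricted
   to a pair of homogeneous components (g0, h0), is A-balanced, hence a
   functional on S (x)_A S; since m(t) = 1 has a nonzero coefficient, some
   such functional does not vanish on t.  For every k with s(k) = t(g0), the centrality
   d_k t = t d_k and the injectivity of alpha_k show that the (k g0, h0)
   functional does not vanish on t either, so k g0 occurs among the finitely
   many degrees of the x_i.  Hence only finitely many morphisms start at t(g0),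
   and by connectedness G is finite. *)

(* Otherwise [inv] and [comp] would refer to homonyms imported from MathComp. *)
Notation inv := Defs.inv.
Notation comp := Defs.comp.

Lemma sum_pred1_seq (M : zmodType) (I : eqType) (s : seq I) (i : I) (F : I -> M) :
  uniq s -> i \in s -> \sum_(j <- s | j == i) F j = F i.
Proof.
move=> us ins; rewrite big_mkcond (bigD1_seq i) //= eqxx big1 ?addr0 //.
by move=> j /negbTE ->.
Qed.

Lemma sum_mulr_id (R : pzRingType) (u : R) (I : Type) (s : seq I) (f : I -> R) :
  (forall i, f i * u = f i) -> (\sum_(i <- s) f i) * u = \sum_(i <- s) f i.
Proof. by move=> h; rewrite big_distrl /=; apply: eq_bigr => i _; rewrite h. Qed.

Section GroupoidFacts.
Variable G : groupoid.
Implicit Types (e : obj G) (g h k x y : mor G).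

Lemma inv_inv g : inv (inv g) = g.
Proof.
set x := inv (inv g).
have sx : src x = src g by rewrite /x src_inv tgt_inv.
rewrite -[x]comp_idr sx -comp_invl Defs.compA; last first.
- by rewrite src_inv.
- by rewrite sx tgt_inv.
by rewrite /x comp_invl src_inv comp_idl.
Qed.

Lemma inv_idm e : inv (idm e) = idm e.
Proof.
have := comp_idl (inv (idm e)); rewrite tgt_inv src_idm => <-.
by rewrite comp_invr tgt_idm.
Qed.

Lemma compKg k g : src k = tgt g -> comp (inv k) (comp k g) = g.
Proof. by move=> h; rewrite Defs.compA ?src_inv // comp_invl h comp_idl. Qed.

Lemma compgK k g : src k = tgt g -> comp (comp k g) (inv g) = k.
Proof. by move=> h; rewrite -Defs.compA ?tgt_inv // comp_invr -h comp_idr. Qed.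

Lemma eq_comp2l k g g' :
  src k = tgt g -> src k = tgt g' -> (comp k g == comp k g') = (g == g').
Proof.
move=> h1 h2; apply/eqP/eqP => [E|-> //].
by rewrite -(compKg h1) E compKg.
Qed.

Lemma inv_unique x y : src x = tgt y -> comp x y = idm (tgt x) -> y = inv x.
Proof.
move=> h e.
rewrite -[y]comp_idl -h -comp_invl -Defs.compA ?src_inv //.
by rewrite e -src_inv comp_idr.
Qed.

Lemma inv_comp k g : src k = tgt g -> inv (comp k g) = comp (inv g) (inv k).
Proof.
move=> h; have s1 : src (inv g) = tgt (inv k) by rewrite src_inv tgt_inv.
symmetry; apply: inv_unique.
  by rewrite src_comp // tgt_comp // tgt_inv.
rewrite Defs.compA; last 2 first.
- by rewrite src_comp // tgt_inv.
- by rewrite src_inv tgt_inv.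
by rewrite compgK // comp_invr tgt_comp.
Qed.

Lemma finite_groupoid_of_star e (s : seq (mor G)) :
  connected G -> (forall k, src k = e -> k \in s) -> finite_groupoid G.
Proof.
move=> conn star; exists [seq comp x (inv y) | x <- s, y <- s] => m.
have [j [sj tj]] := conn e (src m).
rewrite -(compgK (k := m) (g := j)) //.
by apply: allpairs_f; apply: star; rewrite ?src_comp.
Qed.

End GroupoidFacts.

Section SkewGroupoidRing.
Variables (G : groupoid) (R : pzRingType) (one : mor G -> R) (alpha : mor G -> R -> R).
Hypothesis act : global_action one alpha.
Implicit Types (g h k : mor G) (t : tensor G R).

Let upa : unital_partial_action one alpha := proj1 act.
Let oneK g : one g * one g = one g := one_idem upa g.
Let oneC g a : one g * a = a * one g := one_central upa g a.

Lemma one_tgt g : one g = one (idm (tgt g)).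
Proof.
have h1 : inI (one (idm (tgt g))) (one g) by apply/(proj2 act g); exists 1; rewrite mul1r.
have h2 : inI (one g) (one (idm (tgt g))) by apply/(proj2 act g); exists 1; rewrite mul1r.
case: h1 h2 => [b1 E1] [b2 E2].
have l : one g * one (idm (tgt g)) = one g by rewrite E1 -mulrA oneK.
have r : one (idm (tgt g)) * one g = one (idm (tgt g)) by rewrite E2 -mulrA oneK.
by rewrite -[LHS]l oneC r.
Qed.

Lemma one_invE g : one (inv g) = one (idm (src g)).
Proof. by rewrite one_tgt tgt_inv. Qed.

Lemma alpha0 g : alpha g 0 = 0.
Proof.
have z : inI (one (inv g)) 0 by exists 0; rewrite mul0r.
have := alpha_add upa z z; rewrite addr0 => E.
by apply: (addrI (alpha g 0)); rewrite addr0 -E.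
Qed.

Lemma alpha_ideal g x : x * one (inv g) = x -> alpha g x * one g = alpha g x.
Proof.
by move=> h; have [b ->] := alpha_into upa (ex_intro _ x (esym h)); rewrite -mulrA oneK.
Qed.

Lemma alphaD g x y : x * one (inv g) = x -> y * one (inv g) = y ->
  alpha g (x + y) = alpha g x + alpha g y.
Proof. by move=> hx hy; apply: (alpha_add upa); [exists x | exists y]. Qed.

Lemma alphaM g x y : x * one (inv g) = x -> y * one (inv g) = y ->
  alpha g (x * y) = alpha g x * alpha g y.
Proof. by move=> hx hy; apply: (alpha_mul upa); [exists x | exists y]. Qed.

Lemma alpha_idE e x : x * one (idm e) = x -> alpha (idm e) x = x.
Proof. by move=> hx; apply: (alpha_id upa); exists x. Qed.

Lemma alpha_compE g h x : src g = tgt h ->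
  x * one (inv h) = x -> alpha h x * one (inv g) = alpha h x ->
  alpha g (alpha h x) = alpha (comp g h) x.
Proof.
by move=> e hx hhx; case: (alpha_comp upa e (ex_intro _ x (esym hx))
  (ex_intro _ _ (esym hhx))).
Qed.

Lemma alphaK g x : x * one (inv g) = x -> alpha (inv g) (alpha g x) = x.
Proof.
move=> h; rewrite alpha_compE ?src_inv //; last by rewrite inv_inv alpha_ideal.
by rewrite comp_invl alpha_idE // -one_invE.
Qed.

Lemma alpha_one g : alpha g (one (inv g)) = one g.
Proof.
have u1 : alpha g (one (inv g)) * one g = alpha g (one (inv g)).
  by apply: alpha_ideal; rewrite oneK.
have [x [[b hx] ex]] := alpha_surj upa (ex_intro _ 1 (esym (mul1r (one g)))).
have hx' : x * one (inv g) = x by rewrite hx -mulrA oneK.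
by rewrite -ex -{1}hx' alphaM ?oneK // ex oneC u1.
Qed.

Lemma alpha_sum g (I : Type) (s : seq I) (f : I -> R) :
  (forall i, f i * one (inv g) = f i) ->
  alpha g (\sum_(i <- s) f i) = \sum_(i <- s) alpha g (f i).
Proof.
move=> h; elim: s => [|i s IH]; first by rewrite !big_nil alpha0.
by rewrite !big_cons alphaD ?IH // sum_mulr_id.
Qed.

Lemma mulr_one_id g x y : x * one g = x -> x * y * one g = x * y.
Proof. by move=> h; rewrite -mulrA -oneC mulrA h. Qed.

Lemma alpha_inv_mulr g a y :
  alpha (inv g) (a * one g) * y * one (inv g) = alpha (inv g) (a * one g) * y.
Proof. by apply/mulr_one_id/alpha_ideal; rewrite inv_inv -mulrA oneK. Qed.

Lemma evalS2_mulS_embA (M : zmodType) (F : mor G -> R -> mor G -> R -> M) r x y :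
  evalS2 one F (mulS one alpha x (embA one r)) y =
  \sum_(p <- x) \sum_(q <- y)
     F (comp p.1 (idm (src p.1)))
       (alpha p.1 (alpha (inv p.1) (p.2 * one p.1) *
          (r * one (idm (src p.1)) * one (idm (src p.1))))
          * one (comp p.1 (idm (src p.1))))
       q.1 (q.2 * one q.1).
Proof.
rewrite /evalS2 /mulS big_flatten big_map; apply: eq_bigr => p _.
rewrite big_map big_filter /embA big_map.
under eq_bigl do rewrite /= tgt_idm eq_sym.
by rewrite sum_pred1_seq ?enum_uniq ?mem_enum.
Qed.

Lemma evalS2_embA_mulS (M : zmodType) (F : mor G -> R -> mor G -> R -> M) r x y :
  evalS2 one F x (mulS one alpha (embA one r) y) =
  \sum_(p <- x) \sum_(q <- y)
     F p.1 (p.2 * one p.1)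
       (comp (idm (tgt q.1)) q.1)
       (alpha (idm (tgt q.1)) (alpha (inv (idm (tgt q.1)))
          (r * one (idm (tgt q.1)) * one (idm (tgt q.1))) * (q.2 * one q.1))
          * one (comp (idm (tgt q.1)) q.1)).
Proof.
rewrite /evalS2; apply: eq_bigr => p _.
rewrite /mulS big_flatten /embA !big_map.
under eq_bigr do rewrite big_map big_filter /= src_idm.
under eq_bigr do rewrite big_mkcond.
rewrite exchange_big /=; apply: eq_bigr => q _.
by rewrite -big_mkcond /= -enumT sum_pred1_seq ?enum_uniq ?mem_enum.
Qed.

(* [mul_form g a h b] is the coefficient of (a d_g)(b d_h) in S. *)
Definition mul_form : mor G -> R -> mor G -> R -> R :=
  fun g a h b =>
    if src g == tgt h then alpha g (alpha (inv g) (a * one g) * (b * one h)) else 0.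

Definition component (M : zmodType) g0 h0 (F : mor G -> R -> mor G -> R -> M) :
    mor G -> R -> mor G -> R -> M :=
  fun g a h b => if (g == g0) && (h == h0) then F g a h b else 0.

Definition left_support t : seq (mor G) := flatten [seq [seq q.1 | q <- p.1] | p <- t].

Definition pair_support t : seq (mor G * mor G) :=
  undup (flatten [seq flatten [seq [seq (q.1, q'.1) | q' <- p.2] | q <- p.1] | p <- t]).

Lemma evalT_component_support (M : zmodType) (F : mor G -> R -> mor G -> R -> M) g0 h0 t :
  evalT one (component g0 h0 F) t != 0 -> g0 \in left_support t.
Proof.
apply: contraR => ng.
rewrite /evalT big1_seq //= => p pin.
rewrite /evalS2 big1_seq //= => q qin.
rewrite big1 // => q' _; rewrite /component.
case: ifP => // /andP [/eqP E _]; case/negP: ng.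
apply/flatten_mapP; exists p => //; apply/mapP; exists q => //.
Qed.

Lemma evalT_pair_support (M : zmodType) (F : mor G -> R -> mor G -> R -> M) t :
  evalT one F t = \sum_(u <- pair_support t) evalT one (component u.1 u.2 F) t.
Proof.
symmetry; rewrite /evalT exchange_big; apply: eq_big_seq => p pin.
rewrite /evalS2 exchange_big; apply: eq_big_seq => q qin.
rewrite exchange_big; apply: eq_big_seq => q' q'in /=.
rewrite /component -big_mkcond /=.
rewrite (eq_bigl (fun u => u == (q.1, q'.1))); last first.
  by move=> [g h]; rewrite /= xpair_eqE (eq_sym g) (eq_sym h).
apply: (@sum_pred1_seq _ _ _ _ (fun=> _)); first exact: undup_uniq.
rewrite mem_undup.
apply/flatten_mapP; exists p => //; apply/flatten_mapP; exists q => //.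
by apply/mapP; exists q'.
Qed.

Lemma evalT_mulr (F : mor G -> R -> mor G -> R -> R) (c : R) t :
  evalT one (fun g a h b => F g a h b * c) t = evalT one F t * c.
Proof.
rewrite /evalT big_distrl; apply: eq_bigr => p _.
rewrite /evalS2 big_distrl; apply: eq_bigr => q _.
by rewrite big_distrl.
Qed.

Definition mul_form_at (f : obj G) : mor G -> R -> mor G -> R -> R :=
  fun g a h b => (if comp g h == idm f then mul_form g a h b else 0) * one (idm f).

Lemma coefS_multT_idm t f :
  coefS one (multT one alpha t) (idm f) = evalT one (mul_form_at f) t.
Proof.
rewrite /coefS /multT big_flatten big_map /evalT; apply: eq_bigr => p _.
rewrite /mulS big_flatten big_map /evalS2; apply: eq_bigr => q _.
rewrite big_map big_filter_cond /= big_mkcond; apply: eq_bigr => q' _ /=.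
rewrite /mul_form_at /mul_form andbC.
case: eqP => _ /=; last by rewrite mul0r.
case: ifP => _ /=; last by rewrite mul0r.
by rewrite -[q.2 * one q.1 * one q.1]mulrA oneK -[q'.2 * one q'.1 * one q'.1]mulrA oneK.
Qed.

Lemma coefS_oneS_idm f : coefS one (oneS G R) (idm f) = one (idm f).
Proof.
rewrite /coefS /oneS big_map.
rewrite (eq_bigl (fun e => e == f)); last first.
  move=> e /=; apply/eqP/eqP => [E|-> //].
  by rewrite -(src_idm e) E src_idm.
by rewrite (@sum_pred1_seq _ _ _ _ (fun=> _)) ?enum_uniq ?mem_enum // mul1r.
Qed.

Lemma evalT_component_mul_form_at f g0 h0 t :
  evalT one (component g0 h0 (mul_form_at f)) t =
  evalT one (component g0 h0 mul_form) t *
    ((if comp g0 h0 == idm f then 1 else 0) * one (idm f)).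
Proof.
rewrite -evalT_mulr /evalT; apply: eq_bigr => p _; rewrite /evalS2.
apply: eq_bigr => q _; apply: eq_bigr => q' _.
rewrite /component /mul_form_at; case: andP => [[/eqP -> /eqP ->]|_]; last by rewrite mul0r.
by case: ifP => _; rewrite ?mul1r ?mul0r ?mulr0 ?mulrA ?mulr1.
Qed.

Lemma separable_component_neq0 t f :
  eqS one (multT one alpha t) (oneS G R) -> one (idm f) != 0 ->
  exists u : mor G * mor G, evalT one (component u.1 u.2 mul_form) t != 0.
Proof.
move=> m1 f0.
have : evalT one (mul_form_at f) t != 0 by rewrite -coefS_multT_idm m1 coefS_oneS_idm.
rewrite evalT_pair_support.
have [/hasP [u _ nz_u] _|/hasPn vanish] :=
  boolP (has (fun u => evalT one (component u.1 u.2 mul_form) t != 0) (pair_support t)).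
  by exists u.
rewrite big1_seq ?eqxx // => u /= /vanish /negPn /eqP.
by rewrite evalT_component_mul_form_at => ->; rewrite mul0r.
Qed.

Lemma balanced_component_mul_form g0 h0 : balanced one alpha (component g0 h0 mul_form).
Proof.
have a_ideal g a : a * one g * one (inv (inv g)) = a * one g.
  by rewrite inv_inv -mulrA oneK.
split; [|split].
- move=> g h a a' b; rewrite /component /mul_form.
  case: ifP => _; last by rewrite addr0.
  case: ifP => _; last by rewrite addr0.
  by rewrite mulrDl alphaD ?a_ideal // mulrDl alphaD ?alpha_inv_mulr.
- move=> g h a b b'; rewrite /component /mul_form.
  case: ifP => _; last by rewrite addr0.
  case: ifP => _; last by rewrite addr0.
  by rewrite mulrDl mulrDr alphaD ?alpha_inv_mulr.
move=> r x y; rewrite evalS2_mulS_embA evalS2_embA_mulS.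
apply: eq_bigr => [[g a]] _; apply: eq_bigr => [[h b]] _ /=.
rewrite comp_idr comp_idl /component /mul_form.
case: ifP => // _; case: eqP => // e.
congr (alpha g _).
set E := one (idm (src g)).
have EE : E * E = E by rewrite oneK.
have oh : one h = E by rewrite one_tgt -e.
rewrite -mulrA oneK alpha_ideal ?alpha_inv_mulr // alphaK ?alpha_inv_mulr // -e -/E inv_idm.
rewrite (@alpha_idE _ (r * E * E)); last by rewrite -mulrA EE.
rewrite alpha_idE; last by rewrite oh -!mulrA EE.
have EEl z : E * (E * z) = E * z by rewrite mulrA EE.
by rewrite -[a * one g * one g]mulrA oneK oh -!mulrA !EEl !EE.
Qed.

Lemma component_mul_form_ideal g0 h0 g a h b :
  component g0 h0 mul_form g a h b * one (idm (tgt g0)) = component g0 h0 mul_form g a h b.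
Proof.
rewrite /component /mul_form; case: andP => [[/eqP -> _]|]; last by rewrite mul0r.
case: ifP => _; last by rewrite mul0r.
by rewrite -one_tgt; apply/alpha_ideal/mulr_one_id/alpha_ideal; rewrite inv_inv -mulrA oneK.
Qed.

Lemma evalT_component_mul_form_ideal g0 h0 t :
  evalT one (component g0 h0 mul_form) t * one (idm (tgt g0)) =
  evalT one (component g0 h0 mul_form) t.
Proof.
apply: sum_mulr_id => p; apply: sum_mulr_id => q; apply: sum_mulr_id => q'.
exact: component_mul_form_ideal.
Qed.

Lemma component_mul_form_lmul k g0 h0 g h a b :
  src k = tgt g -> src k = tgt g0 ->
  component (comp k g0) h0 mul_form (comp k g)
     (alpha k (alpha (inv k) (1 * one k) * (a * one g)) * one (comp k g)) h b
  = alpha k (component g0 h0 mul_form g (a * one g) h b).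
Proof.
move=> e e0; rewrite /component eq_comp2l //.
case: ifP => _; last by rewrite alpha0.
rewrite /mul_form src_comp //.
case: ifP => _; last by rewrite alpha0.
have ak : alpha (inv k) (one k) = one (inv k) by have := alpha_one (inv k); rewrite inv_inv.
have og : one g = one (inv k) by rewrite one_tgt one_invE e.
have okg : one (comp k g) = one k by rewrite one_tgt tgt_comp // -one_tgt.
have a_ideal : a * one g * one (inv k) = a * one g by rewrite -og -mulrA oneK.
rewrite mul1r ak -{1}og oneC okg -[a * one g * one g]mulrA oneK alpha_ideal //.
have -> : alpha k (alpha g (alpha (inv g) (a * one g) * (b * one h))) =
          alpha (comp k g) (alpha (inv g) (a * one g) * (b * one h)).
  by apply: alpha_compE; rewrite ?alpha_inv_mulr // -og alpha_ideal ?alpha_inv_mulr.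
have alpha_back : alpha (comp (inv g) (inv k)) (alpha k (a * one g)) = alpha (inv g) (a * one g).
  have sgk : src (comp (inv g) (inv k)) = tgt k by rewrite src_comp ?src_inv ?tgt_inv.
  rewrite alpha_compE //; last by rewrite one_invE sgk -one_tgt alpha_ideal.
  by rewrite -{2}[k]inv_inv compgK ?src_inv ?tgt_inv.
by rewrite inv_comp // alpha_ideal // alpha_back.
Qed.

Lemma evalT_component_lmul k g0 h0 t :
  src k = tgt g0 ->
  evalT one (component (comp k g0) h0 mul_form)
     [seq (mulS one alpha [:: (k, 1)] p.1, p.2) | p <- t]
  = alpha k (evalT one (component g0 h0 mul_form) t).
Proof.
move=> e0.
have ideal_k g a h b : component g0 h0 mul_form g a h b * one (inv k) =
                   component g0 h0 mul_form g a h b.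
  by rewrite one_invE e0 component_mul_form_ideal.
rewrite /evalT big_map alpha_sum; last first.
  by move=> p; rewrite /evalS2; do 2!apply: sum_mulr_id => ?; apply: ideal_k.
apply: eq_bigr => p _ /=.
rewrite /evalS2 alpha_sum; last by move=> q; apply: sum_mulr_id => q'; apply: ideal_k.
rewrite /mulS /= cats0 big_map big_filter big_mkcond /=.
apply: eq_bigr => q _.
rewrite alpha_sum //.
case: eqP => e.
  by apply: eq_bigr => q' _; rewrite component_mul_form_lmul.
rewrite big1 // => q' _; rewrite /component.
case: ifP => [/andP [/eqP E _]|_]; last by rewrite alpha0.
by case: e; rewrite E.
Qed.

Lemma central_component_lmul_support t g0 h0 k :
  (forall s, eqT one alpha [seq (mulS one alpha s p.1, p.2) | p <- t]
                           [seq (p.1, mulS one alpha p.2 s) | p <- t]) ->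
  evalT one (component g0 h0 mul_form) t != 0 -> src k = tgt g0 ->
  comp k g0 \in left_support t.
Proof.
move=> central nz0 k_g0.
have -> : left_support t = left_support [seq (p.1, mulS one alpha p.2 [:: (k, 1)]) | p <- t].
  by rewrite /left_support -map_comp.
apply: (evalT_component_support (F := mul_form) (h0 := h0)).
rewrite -(central _ _ _ (balanced_component_mul_form _ _)) evalT_component_lmul //.
apply: contra nz0 => /eqP E; apply/eqP/(alpha_inj upa (g := k)); rewrite ?E ?alpha0 //.
  exists (evalT one (component g0 h0 mul_form) t).
  by rewrite one_invE k_g0 evalT_component_mul_form_ideal.
by exists 0; rewrite mul0r.
Qed.

End SkewGroupoidRing.

Unset Implicit Arguments.

Theorem proposition4p1 (G : groupoid) (R : pzRingType)
    (one : mor G -> R) (alpha : mor G -> R -> R) :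
  connected G ->
  direct_sum_decomp one ->
  (forall e : obj G, exists a : R, inI (one (idm e)) a /\ a <> 0) ->
  global_action one alpha ->
  separable_ext one alpha ->
  finite_groupoid G.
Proof.
move=> conn _ nz act [t [m1 central]].
have [f _|no_obj] := pickP (fun _ : obj G => true); last first.
  by exists [::] => g; have := no_obj (src g).
have f0 : one (idm f) != 0.
  by have [a [[b ->] a0]] := nz f; apply: contra_not_neq a0 => ->; rewrite mulr0.
have [[g0 h0] /= nz0] := separable_component_neq0 act m1 f0.
apply: (finite_groupoid_of_star (e := tgt g0)
          (s := [seq comp x (inv g0) | x <- left_support t])) => // k k_g0.
apply/mapP; exists (comp k g0); first exact: central_component_lmul_support nz0 k_g0.
by rewrite compgK.
Qed.
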